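(* Let $\{x_i\}_{i\in[N]}$ be the global solution of the delayed consensus system described in the context. Then for almost all $t>2\tau$, \[ \frac{\mathrm d}{\mathrm dt}d_x(t)\le 2\int_{t-\tau}^t d_x(s-\tau)\,\mathrm ds+2\int_{t-\sigma}^t d_x(s-\tau)\,\mathrm ds+2\int_{t-\tau}^t\int_{s-\tau}^s\max_{l\in[N]}|\dot x_l(r)|\,\mathrm dr\,\mathrm ds+2\int_{t-\sigma}^t\int_{s-\tau}^s\max_{l\in[N]}|\dot x_l(r)|\,\mathrm dr\,\mathrm ds-N\underline a(t)d_x(t), \] where $\underline a(t):=\min_{i,j\in[N]}a_{ij}(t)$.
   Context: Let $N\ge2$, $d\ge1$ be integers, $[N]=\{1,\dots,N\}$, $0\le\sigma\le\tau$. Let $\psi:[0,\infty)\to[0,\infty)$ be continuous, nonincreasing, positive everywhere, with $\sup\psi\le1$. Given $x_i^0\in C([-\tau,0],\mathbb{R}^d)$, $\{x_i\}$ is the global solution (continuous on $[-\tau,\infty)$, continuously differentiable on $[0,\infty)$) of $\dot x_i(t)=\sum_{j\ne i}a_{ij}(t)(x_j(t-\tau)-x_i(t-\sigma))$ for $t>0$, with $a_{ij}(t)=\frac1{N-1}\psi(|x_i(t-\sigma)-x_j(t-\tau)|)$ for all $i,j\in[N]$, and $x_i=x_i^0$ on $[-\tau,0]$. $d_x(t):=\max_{i,j\in[N]}|x_i(t)-x_j(t)|$. *)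

From HB Require Import structures.
From mathcomp Require Import all_boot all_order all_algebra.
From mathcomp Require Import all_classical all_reals all_analysis.
Set Implicit Arguments. Unset Strict Implicit. Unset Printing Implicit Defensive.
Import Order.TTheory GRing.Theory Num.Theory.
Import numFieldNormedType.Exports.
Local Open Scope classical_set_scope.
Local Open Scope ring_scope.

Section Defs.
Variable R : realType.

Definition enorm (d : nat) (v : 'rV[R]_d) : R :=
  Num.sqrt (\sum_(k < d) (v ord0 k) ^+ 2).

(* minimum of a function over a finite type (0 if the type is empty) *)
Definition fmin (T : finType) (f : T -> R) : R :=
  if [pick i : T] is Some i0 then \big[Num.min/f i0]_(i : T) f i else 0.

Definition aij (N d : nat) (psi : R -> R) (sigma tau : R)
  (x : 'I_N -> R -> 'rV[R]_d) (i j : 'I_N) (t : R) : R :=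
  (N.-1%:R)^-1 * psi (enorm (x i (t - sigma) - x j (t - tau))).

Definition amin (N d : nat) (psi : R -> R) (sigma tau : R)
  (x : 'I_N -> R -> 'rV[R]_d) (t : R) : R :=
  fmin (fun p : 'I_N * 'I_N => aij psi sigma tau x p.1 p.2 t).

Definition diam (N d : nat) (x : 'I_N -> R -> 'rV[R]_d) (t : R) : R :=
  \big[Num.max/0]_(i < N) \big[Num.max/0]_(j < N) enorm (x i t - x j t).

Definition maxvel (N d : nat) (x : 'I_N -> R -> 'rV[R]_d) (r : R) : R :=
  \big[Num.max/0]_(l < N) enorm ('D_1 (x l) r).

End Defs.

From HB Require Import structures.
From mathcomp Require Import all_boot all_order all_algebra.
From mathcomp Require Import all_classical all_reals all_analysis.
From mathcomp Require Import ring lra.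
Import Order.TTheory GRing.Theory Num.Theory.
Import numFieldNormedType.Exports.
Local Open Scope classical_set_scope.
Local Open Scope ring_scope.

(** The square of the diameter is the maximum of the finitely many C^1
    functions [|x_i - x_j|^2].  Such a maximum is differentiable at every time
    where tied functions have equal derivatives and where, if all positions
    coincide, all relative velocities vanish; every other time is a simple zero
    of a C^1 function, hence isolated, so these times form a countable,
    Lebesgue-null set.

    Where [d_x] is differentiable and [d_x(t) = |x_i(t) - x_j(t)| > 0], the
    function [d_x^2 - |x_i - x_j|^2] is minimal at [t], hence
    [d_x d_x' = <x_i - x_j, v_i - v_j>].  Split [v_i] into
    [sum_m a_im (x_m(t) - x_i(t))] plus delay errors: extremality of the pair
    [(i, j)] makes each [<x_i - x_j, x_m - x_i>] nonpositive, so [a_im] may be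
    replaced by [a_min], and the two resulting sums add up to [-N d_x^2].  The
    delay errors [|x_l(t) - x_l(t - h)|] are bounded by integrating
    [|v_l(s)| <= d_x(s - tau) + int_(s - tau)^s max_l |v_l|]. *)

(** * Euclidean inequalities *)

Section SumsAndMaxima.
Context {R : realType}.

Lemma sqrtr_max (a b : R) :
  Num.sqrt (Num.max a b) = Num.max (Num.sqrt a) (Num.sqrt b).
Proof.
have [ab|ba] := leP a b; first by rewrite !max_r // ler_wsqrtr.
by rewrite !max_l // ler_wsqrtr // ltW.
Qed.

Lemma bigmax_ge0 (I : Type) (r : seq I) (F : I -> R) :
  0 <= \big[Num.max/0]_(i <- r) F i.
Proof. by elim: r => [|i r IH]; rewrite ?big_nil ?big_cons ?le_max ?IH ?orbT. Qed.

Lemma bigmax_le_sum (I : finType) (F : I -> R) :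
  (forall i, 0 <= F i) -> \big[Num.max/0]_i F i <= \sum_i F i.
Proof.
move=> F_ge0; apply: bigmax_le => [|j _]; first exact: sumr_ge0.
by rewrite (bigD1 j) //= lerDl sumr_ge0.
Qed.

Lemma fmin_le (T : finType) (f : T -> R) p : fmin f <= f p.
Proof. by rewrite /fmin; case: pickP => [i0 _|/(_ p)//]; exact: bigmin_le. Qed.

Lemma sumr_sqr_le_sqr_sum (I : Type) (r : seq I) (F : I -> R) :
  (forall i, 0 <= F i) -> \sum_(i <- r) F i ^+ 2 <= (\sum_(i <- r) F i) ^+ 2.
Proof.
move=> F_ge0; elim: r => [|i r IH]; first by rewrite !big_nil expr0n.
rewrite !big_cons sqrrD mulr2n.
have S_ge0 : 0 <= \sum_(j <- r) F j by exact: sumr_ge0.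
have := mulr_ge0 (F_ge0 i) S_ge0; lra.
Qed.

Lemma sumr_const_neq (N : nat) (l : 'I_N) (c : R) :
  \sum_(m < N | m != l) c = N.-1%:R * c.
Proof. by rewrite sumr_const cardC1 card_ord mulr_natl. Qed.

End SumsAndMaxima.

Section EuclideanRow.
Context {R : realType} {d : nat}.
Implicit Types (u w : 'rV[R]_d) (a : R).

Definition dot u w : R := \sum_(k < d) u ord0 k * w ord0 k.

Lemma dotC u w : dot u w = dot w u.
Proof. by apply: eq_bigr => k _; rewrite mulrC. Qed.

Lemma dot0r u : dot u 0 = 0.
Proof. by apply: big1 => k _; rewrite mxE mulr0. Qed.

Lemma dotDr u w1 w2 : dot u (w1 + w2) = dot u w1 + dot u w2.
Proof. by rewrite /dot -big_split; apply: eq_bigr => k _; rewrite mxE mulrDr. Qed.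

Lemma dotNr u w : dot u (- w) = - dot u w.
Proof. by rewrite /dot -sumrN; apply: eq_bigr => k _; rewrite mxE mulrN. Qed.

Lemma dotNl u w : dot (- u) w = - dot u w.
Proof. by rewrite dotC dotNr dotC. Qed.

Lemma dotBr u w1 w2 : dot u (w1 - w2) = dot u w1 - dot u w2.
Proof. by rewrite dotDr dotNr. Qed.

Lemma dotZr u a w : dot u (a *: w) = a * dot u w.
Proof. by rewrite /dot mulr_sumr; apply: eq_bigr => k _; rewrite mxE mulrCA. Qed.

Lemma dot_sumr (I : Type) (r : seq I) (P : pred I) u (F : I -> 'rV[R]_d) :
  dot u (\sum_(i <- r | P i) F i) = \sum_(i <- r | P i) dot u (F i).
Proof. by elim/big_rec2: _ => [|i w y _ <-]; rewrite ?dot0r ?dotDr. Qed.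

Lemma enorm_ge0 u : 0 <= enorm u.
Proof. exact: sqrtr_ge0. Qed.

Lemma enorm0 : enorm (0 : 'rV[R]_d) = 0.
Proof. by rewrite /enorm big1 ?sqrtr0 // => k _; rewrite mxE expr0n. Qed.

Lemma enorm_sqr u : enorm u ^+ 2 = dot u u.
Proof.
rewrite sqr_sqrtr; last by apply: sumr_ge0 => k _; exact: sqr_ge0.
by apply: eq_bigr => k _; rewrite expr2.
Qed.

Lemma enorm_eq0 u : enorm u = 0 -> u = 0.
Proof.
move/eqP; rewrite sqrtr_eq0 => sum_le0.
have sum0 : \sum_(k < d) u ord0 k ^+ 2 = 0.
  by apply/eqP; rewrite eq_le sum_le0 sumr_ge0 // => k _; exact: sqr_ge0.
apply/matrixP => i k; rewrite ord1 mxE; apply/eqP; rewrite -sqrf_eq0.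
by rewrite (psumr_eq0P (fun k _ => sqr_ge0 (u ord0 k)) sum0).
Qed.

Lemma enorm_gt0 u : u != 0 -> 0 < enorm u.
Proof.
move=> u_neq0; rewrite lt_def enorm_ge0 andbT.
by apply: contraNneq u_neq0 => /enorm_eq0 ->.
Qed.

Lemma CauchySchwarz_dot u w : dot u w <= enorm u * enorm w.
Proof.
have [->|u0] := eqVneq u 0; first by rewrite dotC dot0r enorm0 mul0r.
have [->|w0] := eqVneq w 0; first by rewrite dot0r enorm0 mulr0.
have ab_gt0 := mulr_gt0 (enorm_gt0 u u0) (enorm_gt0 w w0).
set a := enorm u; set b := enorm w in ab_gt0 *.
have : 0 <= \sum_(k < d) (b * u ord0 k - a * w ord0 k) ^+ 2.
  by apply: sumr_ge0 => k _; exact: sqr_ge0.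
have -> : \sum_(k < d) (b * u ord0 k - a * w ord0 k) ^+ 2 =
    b ^+ 2 * dot u u - 2 * a * b * dot u w + a ^+ 2 * dot w w.
  by rewrite /dot !mulr_sumr -sumrB -big_split /=; apply: eq_bigr => k _; ring.
rewrite -!enorm_sqr -/a -/b.
have -> : b ^+ 2 * a ^+ 2 - 2 * a * b * dot u w + a ^+ 2 * b ^+ 2 =
  2 * (a * b) * (a * b - dot u w) by ring.
by rewrite pmulr_rge0 ?subr_ge0 // mulr_gt0.
Qed.

Lemma ler_enormD u w : enorm (u + w) <= enorm u + enorm w.
Proof.
rewrite -(@ler_pXn2r _ 2) ?nnegrE ?addr_ge0 ?enorm_ge0 //.
rewrite enorm_sqr !dotDr !(dotC (u + w)) !dotDr (dotC w u) sqrrD -!enorm_sqr.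
by have := CauchySchwarz_dot u w; lra.
Qed.

Lemma enormZ a u : enorm (a *: u) = `|a| * enorm u.
Proof.
rewrite /enorm -sqrtr_sqr -sqrtrM ?sqr_ge0 // mulr_sumr.
by congr Num.sqrt; apply: eq_bigr => k _; rewrite mxE exprMn.
Qed.

Lemma enormN u : enorm (- u) = enorm u.
Proof. by rewrite -scaleN1r enormZ normrN1 mul1r. Qed.

Lemma enorm_distC u w : enorm (u - w) = enorm (w - u).
Proof. by rewrite -enormN opprB. Qed.

Lemma ler_enorm_sum (I : Type) (r : seq I) (P : pred I) (F : I -> 'rV[R]_d) :
  enorm (\sum_(i <- r | P i) F i) <= \sum_(i <- r | P i) enorm (F i).
Proof.
elim/big_rec2: _ => [|i w y _ IH]; first by rewrite enorm0.
by apply: le_trans (ler_enormD _ _) _; rewrite lerD2l.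
Qed.

Lemma enorm_le_sum_abs u : enorm u <= \sum_(k < d) `|u ord0 k|.
Proof.
rewrite -(@ler_pXn2r _ 2) ?nnegrE ?sumr_ge0 ?enorm_ge0 // enorm_sqr.
apply: le_trans _ (sumr_sqr_le_sqr_sum _ _ _ (fun k => normr_ge0 (u ord0 k))).
rewrite le_eqVlt; apply/orP; left; apply/eqP/eq_bigr => k _.
by rewrite real_normK ?num_real // expr2.
Qed.

End EuclideanRow.

(** * One step of the consensus dynamics *)

Section ConsensusStep.
Variables (R : realType) (N d : nat) (X Y Z : 'I_N -> 'rV[R]_d).
Variables (a : 'I_N -> 'I_N -> R) (amin D Et Es : R).
Hypothesis N_gt1 : (1 < N)%N.
Hypothesis amin_le : forall l m, amin <= a l m.
Hypothesis a_ge0 : forall l m, 0 <= a l m.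
Hypothesis a_le : forall l m, a l m <= N.-1%:R^-1.
Hypothesis diamX : forall l m, enorm (X l - X m) <= D.
Hypothesis Y_near : forall l, enorm (X l - Y l) <= Et.
Hypothesis Z_near : forall l, enorm (X l - Z l) <= Es.

Definition velocity l := \sum_(m < N | m != l) a l m *: (Y m - Z l).

Lemma dot_velocity_le i j : enorm (X i - X j) = D ->
  dot (X i - X j) (velocity i) <=
  amin * \sum_(m < N) dot (X i - X j) (X m - X i) + D * (Et + Es).
Proof.
move=> uD; set u := X i - X j; set K := D * (Et + Es).
have D_ge0 : 0 <= D by rewrite -uD enorm_ge0.
have K_ge0 : 0 <= K.
  by rewrite mulr_ge0 // addr_ge0 // (le_trans (enorm_ge0 _) (Y_near i),
    le_trans (enorm_ge0 _) (Z_near i)).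
have N1_gt0 : 0 < N.-1%:R :> R by rewrite ltr0n -ltnS prednK // ltnW.
(* [X i] is an extreme point of the configuration in the direction [u]. *)
have extreme m : dot u (X m - X i) <= 0.
  have -> : X m - X i = (X m - X j) - u by rewrite /u opprB addrA subrK.
  rewrite dotBr -enorm_sqr uD subr_le0 expr2.
  by apply: le_trans (CauchySchwarz_dot _ _) _; rewrite uD ler_wpM2l.
have delay_error m : dot u ((Y m - X m) - (Z i - X i)) <= K.
  apply: le_trans (CauchySchwarz_dot _ _) _; rewrite uD ler_wpM2l //.
  apply: le_trans (ler_enormD _ _) _.
  by rewrite enormN enorm_distC (enorm_distC (Z i)) lerD.
rewrite /velocity dot_sumr.
apply: (@le_trans _ _
  (\sum_(m < N | m != i) (amin * dot u (X m - X i) + N.-1%:R^-1 * K))).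
  apply: ler_sum => m _.
  have -> : Y m - Z i = (X m - X i) + ((Y m - X m) - (Z i - X i)).
    by apply/matrixP => ? k; rewrite !mxE; ring.
  rewrite dotZr dotDr mulrDr; apply: lerD.
    by have := extreme m; have := amin_le i m; nra.
  apply: le_trans (_ : a i m * K <= _); first by rewrite ler_wpM2l.
  by rewrite ler_wpM2r.
rewrite big_split /= -mulr_sumr sumr_const_neq mulrA mulfV ?gt_eqF // mul1r.
by rewrite [X in _ <= amin * X + _](bigD1 i) //= subrr dot0r add0r.
Qed.

Lemma dot_relative_velocity_le i j : enorm (X i - X j) = D ->
  dot (X i - X j) (velocity i - velocity j) <=
  - (N%:R * amin * D ^+ 2) + 2 * (D * (Et + Es)).
Proof.
move=> uD; set u := X i - X j.
have H1 := @dot_velocity_le i j uD.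
have H2 := @dot_velocity_le j i (etrans (enorm_distC _ _) uD).
have Eji : X j - X i = - u by rewrite opprB.
rewrite Eji in H2.
have sum_sqr : \sum_(m < N) dot u (X m - X i) + \sum_(m < N) dot (- u) (X m - X j)
    = - (N%:R * D ^+ 2).
  have -> : - (N%:R * D ^+ 2) = \sum_(m < N) - D ^+ 2.
    by rewrite sumr_const card_ord mulr_natl mulNrn.
  rewrite -big_split /=; apply: eq_bigr => m _.
  have -> : X m - X i = (X m - X j) - u by rewrite /u opprB addrA subrK.
  by rewrite dotNl dotBr -enorm_sqr uD; ring.
rewrite dotBr -dotNl.
apply: le_trans (lerD H1 H2) _.
rewrite -/u addrACA -mulrDr sum_sqr; lra.
Qed.

End ConsensusStep.

Arguments velocity {R N d} Y Z a l.

(** * Pointwise derivatives *)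

Section PointwiseDerivative.
Context {R : realType}.
Implicit Types (f g k : R -> R) (t a b : R).

Lemma derivable1_continuous {V : normedModType R} {f : R -> V} {t} :
  derivable f t 1 -> {for t, continuous f}.
Proof. by move=> df; apply/differentiable_continuous/derivable1_diffP. Qed.

Lemma derive1_quotient_cvg {f t} : derivable f t 1 ->
  h^-1 * (f (h + t) - f t) @[h --> 0^'] --> 'D_1 f t.
Proof.
move=> df; have : h^-1 *: ((f \o shift t) (h *: 1) - f t) @[h --> 0^'] -->
  'D_1 f t := df.
apply: cvg_trans; apply: near_eq_cvg; near=> h.
by rewrite /= /GRing.scale /= mulr1.
Unshelve. all: by end_near. Qed.

Lemma quotient_cvg_is_derive f t l :
  h^-1 * (f (h + t) - f t) @[h --> 0^'] --> l -> is_derive t 1 f l.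
Proof.
move=> fl.
have fl' : h^-1 *: ((f \o shift t) (h *: 1) - f t) @[h --> 0^'] --> l.
  apply: cvg_trans fl; apply: near_eq_cvg; near=> h.
  by rewrite /= /GRing.scale /= mulr1.
have df : derivable f t 1 by apply/cvg_ex; exists l.
by apply: DeriveDef => //; exact: cvg_lim fl'.
Unshelve. all: by end_near. Qed.

Lemma is_derive0_dominated {f k t} : k t = 0 -> is_derive t 1 k 0 ->
  (forall s, `|f s| <= `|k s|) -> is_derive t 1 f 0.
Proof.
move=> kt0 [dk dk0] fk.
have ft0 : f t = 0 by have := fk t; rewrite kt0 normr0 normr_le0 => /eqP.
have := derive1_quotient_cvg dk; rewrite dk0 => /cvgrPdist_le kq.
apply: quotient_cvg_is_derive; apply/cvgrPdist_le => e e0.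
apply: filterS (kq e e0) => h; rewrite !sub0r !normrN ft0 kt0 !subr0 !normrM.
by apply: le_trans; rewrite ler_wpM2l.
Qed.

Lemma derive1_at_global_min f t : derivable f t 1 -> (forall s, f t <= f s) ->
  'D_1 f t = 0.
Proof.
move=> df fmin; have q := derive1_quotient_cvg df.
apply/eqP; rewrite eq_le; apply/andP; split.
- apply: (cvgr_to_le (cvg_dnbhs_at_left q)); near=> h.
  rewrite mulr_le0_ge0 ?subr_ge0 // invr_le0; apply: ltW.
  by near: h; exact: nbhs_left_lt.
- apply: (cvgr_to_ge (cvg_dnbhs_at_right q)); near=> h.
  rewrite mulr_ge0 ?subr_ge0 // invr_ge0; apply: ltW.
  by near: h; exact: nbhs_right_gt.
Unshelve. all: by end_near. Qed.

Lemma is_derive_max f g t a b : is_derive t 1 f a -> is_derive t 1 g b ->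
  (f t = g t -> a = b) -> is_derive t 1 (f \max g) (if f t < g t then b else a).
Proof.
move=> [df <-] [dg <-] tie.
have cf := derivable1_continuous df; have cg := derivable1_continuous dg.
case: ltgtP => [fg|gf|fg].
- apply: DeriveDef; first by apply: derivable_max; rewrite ?lt_eqF.
  by rewrite derive_maxr.
- apply: DeriveDef; first by apply: derivable_max; rewrite ?gt_eqF.
  by rewrite derive_maxl.
- have max_shift (x y : R) : Num.max x y = x + Num.max 0 (y - x).
    have [xy|yx] := leP x y; first by rewrite !max_r ?subr_ge0 // addrC subrK.
    by rewrite !max_l ?addr0 // ?subr_le0 ltW.
  have -> : f \max g = f + (fun s => Num.max 0 ((g - f) s)).
    by apply/funext => s /=; rewrite max_shift.
  rewrite /= -[X in is_derive _ _ _ X]addr0.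
  apply: is_deriveD; first exact: derivableP.
  apply: (@is_derive0_dominated _ (g - f)) => [|| s].
  - by rewrite -[(g - f) t]/(g t - f t) fg subrr.
  - by have := is_deriveB (derivableP dg) (derivableP df); rewrite tie // subrr.
  - by rewrite /Num.max; case: ifP; rewrite ?normr0 ?normr_ge0.
Qed.

(** [S] relates a value at [t] to a derivative at [t]; its functionality is
    what makes ties between the [h i] harmless. *)
Lemma is_derive_bigmax {S : R -> R -> Prop} {I : Type} (r : seq I)
    {h : I -> R -> R} {dh : I -> R} {t} :
  (forall v c c', S v c -> S v c' -> c = c') -> S 0 0 ->
  (forall i, is_derive t 1 (h i) (dh i)) -> (forall i, S (h i t) (dh i)) ->
  exists c, is_derive t 1 (fun s => \big[Num.max/0]_(i <- r) h i s) c /\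
            S (\big[Num.max/0]_(i <- r) h i t) c.
Proof.
move=> S_fun S00 dh_h S_h; elim: r => [|i r [c [dc Sc]]].
  exists 0; rewrite big_nil; split => //.
  by under eq_fun do rewrite big_nil; exact: is_derive_cst.
have tie : h i t = \big[Num.max/0]_(j <- r) h j t -> dh i = c.
  by move=> E; apply: S_fun (S_h i) _; rewrite E.
exists (if h i t < \big[Num.max/0]_(j <- r) h j t then c else dh i); split.
  by under eq_fun do rewrite big_cons; exact: is_derive_max.
by rewrite big_cons /Num.max; case: ifP.
Qed.

Lemma is_derive_sumr n (h : 'I_n -> R -> R) (dh : 'I_n -> R) t :
  (forall i, is_derive t 1 (h i) (dh i)) ->
  is_derive t 1 (fun s => \sum_(i < n) h i s) (\sum_(i < n) dh i).
Proof. by move=> hd; rewrite -fct_sumE; exact: is_derive_sum. Qed.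

Definition simple_zeros g : set R :=
  [set t | g t = 0 /\ exists2 c, is_derive t 1 g c & c != 0].

Lemma countable_simple_zeros g : countable (simple_zeros g).
Proof.
suff -> : simple_zeros g = isolated (simple_zeros g) by exact: countable_isolated.
apply/seteqP; split; last exact: isolatedS.
move=> t Zt; split; first exact: mem_set.
case: (Zt) => gt0 [c [dg <-] c0].
have : \forall h \near 0^', h^-1 * (g (h + t) - g t) != 0.
  exact: cvgr_neq0 _ (derive1_quotient_cvg dg) c0.
rewrite near_withinE => /nbhs_ballP[e e0 qe].
exists (ball t e); first exact: nbhsx_ballx.
apply/seteqP; split => [s [ts [gs0 _]]|s ->]; last by split; [exact: ballxx | exact: Zt].
apply/eqP; apply: contraT => st.
have := qe (s - t); rewrite /ball /= sub0r normrN distrC subrK gs0 gt0 subrr mulr0 eqxx.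
by move=> /(_ ts); apply; rewrite subr_eq0.
Qed.

End PointwiseDerivative.

(** * Continuity and integrals *)

Section Continuity.
Context {R : realType}.

Lemma continuous_sumr (I : Type) (r : seq I) (P : pred I) (V : normedModType R)
    (F : I -> R -> V) (t : R) :
  (forall i, {for t, continuous (F i)}) ->
  {for t, continuous (fun s => \sum_(i <- r | P i) F i s)}.
Proof.
move=> Fc; rewrite -fct_sumE; elim/big_ind: _ => //; first exact: cst_continuous.
by move=> f g; exact: continuousD.
Qed.

Lemma continuous_bigmax (I : Type) (r : seq I) (F : I -> R -> R) (t : R) :
  (forall i, {for t, continuous (F i)}) ->
  {for t, continuous (fun s => \big[Num.max/0]_(i <- r) F i s)}.
Proof.
move=> Fc; elim: r => [|i r IH].
  have -> : (fun s => \big[Num.max/0]_(i <- [::]) F i s) = cst 0.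
    by apply/funext => s; rewrite big_nil.
  exact: cst_continuous.
have -> : (fun s => \big[Num.max/0]_(j <- i :: r) F j s) =
    F i \max (fun s => \big[Num.max/0]_(j <- r) F j s).
  by apply/funext => s; rewrite big_cons.
exact: continuous_max.
Qed.

Lemma continuous_shift (V : normedModType R) (f : R -> V) (c t : R) :
  {for t - c, continuous f} -> {for t, continuous (fun s => f (s - c))}.
Proof.
move=> ft; apply: (@continuous_comp _ _ _ (fun s => s - c) f) => //.
by apply: continuousB => //; exact: cst_continuous.
Qed.

Lemma continuous_within_comp {f g : R -> R} {A : set R} {t : R} :
  {within A, continuous f} -> (forall s, A (g s)) -> {for t, continuous g} ->
  {for t, continuous (f \o g)}.
Proof.
move=> /subspace_continuousP fA gA gt.
suff gtA : g @ t --> within A (nbhs (g t)) by exact: cvg_comp gtA (fA _ (gA t)).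
move=> P /= AP; have AP' : \forall y \near g t, A y -> P y by exact: AP.
have gAP : \forall s \near t, A (g s) -> P (g s) := gt _ AP'.
by apply: filterS gAP => s; apply; exact: gA.
Qed.

End Continuity.

Section VectorCalculus.
Context {R : realType} {d : nat}.
Implicit Types (f : R -> 'rV[R]_d) (t : R).

Lemma is_derive_coord {f t} {df : 'rV[R]_d} k :
  is_derive t 1 f df -> is_derive t 1 (fun s => f s ord0 k) (df ord0 k).
Proof.
move=> [dfd <-]; have dfk := (derivable_mxP f t 1).1 dfd ord0 k.
by apply: DeriveDef => //; rewrite derive_mx // mxE.
Qed.

Lemma continuous_coord f t k :
  {for t, continuous f} -> {for t, continuous (fun s => f s ord0 k)}.
Proof.
move=> ft; apply: (@continuous_comp _ _ _ f (fun M : 'rV[R]_d => M ord0 k)) => //.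
exact: coord_continuous.
Qed.

Lemma is_derive_enorm_sqr f t (df : 'rV[R]_d) : is_derive t 1 f df ->
  is_derive t 1 (fun s => enorm (f s) ^+ 2) (2 * dot (f t) df).
Proof.
move=> dfd.
have dsqr k : is_derive t 1 (fun s => f s ord0 k * f s ord0 k)
    (2 * (f t ord0 k * df ord0 k)).
  have dfk := is_derive_coord k dfd; have := is_deriveM dfk dfk.
  have -> : (fun s => f s ord0 k) * (fun s => f s ord0 k) =
    (fun s => f s ord0 k * f s ord0 k) by [].
  by move/is_derive_eq; apply; rewrite /GRing.scale /=; ring.
have -> : (fun s => enorm (f s) ^+ 2) = (fun s => \sum_k f s ord0 k * f s ord0 k).
  by apply/funext => s; rewrite enorm_sqr.
by rewrite /dot mulr_sumr; exact: is_derive_sumr.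
Qed.

Lemma continuous_enorm f t :
  {for t, continuous f} -> {for t, continuous (fun s => enorm (f s))}.
Proof.
move=> ft; apply: (@continuous_comp _ _ _ _ Num.sqrt); last exact: sqrt_continuous.
apply: continuous_sumr => k.
have -> : (fun s => f s ord0 k ^+ 2) = (fun s => f s ord0 k) \* (fun s => f s ord0 k).
  by apply/funext => s; rewrite /= expr2.
by apply: continuousM; exact: continuous_coord.
Qed.

End VectorCalculus.

Section IntervalIntegrals.
Context {R : realType}.
Notation mu := (@lebesgue_measure R).
Implicit Types (f g : R -> R) (a b c : R).

Lemma continuous_integrable {f a b} :
  {in `[a, b], continuous f} -> mu.-integrable `[a, b] (EFin \o f).
Proof.
move=> fc; apply: continuous_compact_integrable; first exact: segment_compact.
by apply: continuous_in_subspaceT => s; rewrite inE /=; exact: fc.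
Qed.

Lemma Rintegral_derive {g g' a b} : a < b ->
  {in `[a, b], forall s : R, is_derive s 1 g (g' s)} -> {in `[a, b], continuous g'} ->
  \int[mu]_(s in `[a, b]) g' s = g b - g a.
Proof.
move=> ab dg cg'.
have sub_oo s : s \in `]a, b[ -> s \in `[a, b].
  by rewrite !in_itv /= => /andP[sa sb]; rewrite !ltW.
have cg : {within `[a, b], continuous g'}.
  by apply: continuous_in_subspaceT => s; rewrite inE /=; exact: cg'.
rewrite /Rintegral (@continuous_FTC2 _ _ g _ _ ab cg) //.
  split.
  - by move=> s /sub_oo /dg [].
  - apply/cvg_at_right_filter/derivable1_continuous.
    by have [] := dg a; rewrite ?in_itv /= ?lexx ?ltW.
  - apply/cvg_at_left_filter/derivable1_continuous.
    by have [] := dg b; rewrite ?in_itv /= ?lexx ?ltW.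
by move=> s /sub_oo /dg [_ <-]; rewrite derive1E.
Qed.

Lemma ge0_Rintegral_subitv f a x b : a <= x -> x <= b ->
  {in `[a, b], continuous f} -> {in `[a, b], forall s, 0 <= f s} ->
  \int[mu]_(s in `[a, x]) f s <= \int[mu]_(s in `[a, b]) f s.
Proof.
move=> ax xb fc f_ge0.
have := @Rintegral_itvB R f (BLeft a) (BRight b) x (continuous_integrable fc).
rewrite !bnd_simp => /(_ ax xb) E.
rewrite -subr_ge0 E; apply: Rintegral_ge0 => s; rewrite /= in_itv /= => /andP[xs sb].
by apply: f_ge0; rewrite in_itv /= sb andbT (le_trans ax) // ltW.
Qed.

(** By the fundamental theorem of calculus for [s |-> <f b - f a, f s>]. *)
Lemma enorm_sub_le_Rintegral {d} (f f' : R -> 'rV[R]_d) (B : R -> R) a b :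
  a <= b ->
  {in `[a, b], forall s : R, is_derive s 1 f (f' s)} -> {in `[a, b], continuous f'} ->
  {in `[a, b], continuous B} -> {in `[a, b], forall s, enorm (f' s) <= B s} ->
  enorm (f b - f a) <= \int[mu]_(s in `[a, b]) B s.
Proof.
move=> ab df cf' cB f'B.
have intB_ge0 : 0 <= \int[mu]_(s in `[a, b]) B s.
  by apply: Rintegral_ge0 => s sab; exact: le_trans (enorm_ge0 _) (f'B s sab).
have [eab|a_neq_b] := eqVneq a b; first by subst b; rewrite subrr enorm0.
have {a_neq_b}a_lt_b : a < b by rewrite lt_neqAle a_neq_b.
set u := f b - f a.
have dproj : {in `[a, b], forall s : R,
    is_derive s 1 (fun r => dot u (f r)) (dot u (f' s))}.
  move=> s sab; apply: is_derive_sumr => k.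
  have := is_deriveZ (u ord0 k) (is_derive_coord k (df s sab)).
  by have -> : u ord0 k \*: (fun r => f r ord0 k) = (fun r => u ord0 k * f r ord0 k).
have cproj : {in `[a, b], continuous (fun s => dot u (f' s))}.
  move=> s sab; apply: continuous_sumr => k.
  by apply: continuousM; [exact: cst_continuous | exact: continuous_coord (cf' s sab)].
have := Rintegral_derive a_lt_b dproj cproj.
rewrite -dotBr -/u -enorm_sqr => E.
have : enorm u ^+ 2 <= enorm u * \int[mu]_(s in `[a, b]) B s.
  rewrite -E -RintegralZl; [|exact: measurable_itv|exact: continuous_integrable cB].
  apply: le_Rintegral => [|||s sab].
  - exact: measurable_itv.
  - exact: continuous_integrable cproj.
  - have cuB : {in `[a, b], continuous (fun s => enorm u * B s)}.
      move=> s sab; apply: (@continuousM _ _ (cst (enorm u)) B).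
        exact: cst_continuous.
      exact: cB.
    exact: continuous_integrable cuB.
  - apply: le_trans (CauchySchwarz_dot _ _) _.
    by rewrite ler_wpM2l ?enorm_ge0 // f'B.
have [->|u_neq0] := eqVneq (enorm u) 0 => //.
by rewrite expr2 ler_pM2l // lt_def u_neq0 enorm_ge0.
Qed.

Lemma is_derive_Rintegral f c r : c < r -> {in `[c, r + 1], continuous f} ->
  is_derive r 1 (fun y => \int[mu]_(s in `[c, y]) f s) (f r).
Proof.
move=> cr fc.
have rr1 : r < r + 1 by rewrite ltrDl.
have rin : r \in `[c, r + 1] by rewrite in_itv /= !ltW.
have [dF F'f] := continuous_FTC1_closed rr1 (continuous_integrable fc) cr (fc r rin).
by apply: DeriveDef => //; rewrite -derive1E.
Qed.

Lemma continuous_Rintegral_window f c w s0 : 0 <= w -> c < s0 - w ->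
  (forall s, c < s -> {for s, continuous f}) ->
  {for s0, continuous (fun s => \int[mu]_(r in `[s - w, s]) f r)}.
Proof.
move=> w_ge0 cs0 fc.
pose c' := (c + (s0 - w)) / 2.
have cc' : c < c' by rewrite /c'; lra.
have c's0 : c' < s0 - w by rewrite /c'; lra.
pose F y := \int[mu]_(r in `[c', y]) f r.
have dF r : c' < r -> is_derive r 1 F (f r).
  move=> c'r; apply: is_derive_Rintegral => // s.
  by rewrite in_itv /= => /andP[c's _]; apply: fc; lra.
have window s : c' < s - w -> \int[mu]_(r in `[s - w, s]) f r = F s - F (s - w).
  move=> c'sw; have [->|w_neq0] := eqVneq w 0.
    by rewrite subr0 set_itv1 Rintegral_set1 subrr.
  have w_gt0 : 0 < w by rewrite lt_def w_neq0.
  apply: Rintegral_derive; first lra.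
    by move=> r; rewrite in_itv /= => /andP[swr _]; apply: dF; lra.
  by move=> r; rewrite in_itv /= => /andP[swr _]; apply: fc; lra.
have cG : {for s0, continuous (fun s => F s - F (s - w))}.
  have c's0' : c' < s0 by lra.
  apply: continuousB; first by apply: derivable1_continuous; case: (dF s0 c's0').
  by apply/continuous_shift/derivable1_continuous; case: (dF (s0 - w) c's0).
have near_window : \forall s \near s0,
    F s - F (s - w) = \int[mu]_(r in `[s - w, s]) f r.
  near=> s; apply/esym/window.
  near: s; exists (s0 - w - c'); first by rewrite /= subr_gt0.
  by move=> s /=; rewrite ltr_distlC => /andP[h1 h2]; lra.
apply: cvg_trans (near_eq_cvg near_window) _; rewrite /= (window s0 c's0).
exact: cG.
Unshelve. all: by end_near. Qed.

End IntervalIntegrals.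

(** * The delayed consensus system *)

Section DelayedConsensus.
Variables (R : realType) (N d : nat) (sigma tau : R) (psi : R -> R).
Variable x : 'I_N -> R -> 'rV[R]_d.
Hypothesis N_gt1 : (2 <= N)%N.
Hypothesis sigma_ge0 : 0 <= sigma.
Hypothesis sigma_le_tau : sigma <= tau.
Hypothesis psi_cont : {within `[0, +oo[, continuous psi}.
Hypothesis psi_gt0 : forall r : R, 0 <= r -> 0 < psi r.
Hypothesis psi_le1 : forall r : R, 0 <= r -> psi r <= 1.
Hypothesis x_cont : forall i, {within `[- tau, +oo[, continuous (x i)}.

Implicit Types (r s t : R) (i j l m : 'I_N).
Local Notation a := (aij psi sigma tau x).
Local Notation mu := (@lebesgue_measure R).

Definition vel i t :=
  \sum_(j < N | j != i) a i j t *: (x j (t - tau) - x i (t - sigma)).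

Hypothesis x_derive : forall i t, 0 < t -> is_derive t 1 (x i) (vel i t).

Lemma tau_ge0 : 0 <= tau.
Proof. exact: le_trans sigma_le_tau. Qed.

Lemma delayed_in_history {s} : 0 < s -> - tau < s - sigma /\ - tau < s - tau.
Proof. by move: sigma_le_tau; lra. Qed.

Lemma x_continuous i s : - tau < s -> {for s, continuous (x i)}.
Proof.
move=> s_gt; have [xc _] := (continuous_within_itvcyP _ _).1 (x_cont i).
by apply: xc; rewrite in_itv /= s_gt.
Qed.

Lemma aij_continuous i j s : 0 < s -> {for s, continuous (a i j)}.
Proof.
move=> s_gt0.
pose g r := enorm (x i (r - sigma) - x j (r - tau)).
apply: (@continuousM _ _ (cst N.-1%:R^-1) (psi \o g)); first exact: cst_continuous.
apply: (continuous_within_comp psi_cont).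
  by move=> r; rewrite /= in_itv /= andbT enorm_ge0.
have [s_sigma s_tau] := delayed_in_history s_gt0.
by apply/continuous_enorm/continuousB; apply/continuous_shift/x_continuous.
Qed.

Lemma vel_continuous i s : 0 < s -> {for s, continuous (vel i)}.
Proof.
move=> s_gt0; apply: continuous_sumr => j; apply: continuousZ.
  exact: aij_continuous.
have [s_sigma s_tau] := delayed_in_history s_gt0.
by apply/continuousB; apply/continuous_shift/x_continuous.
Qed.

Lemma aij_ge0 l m t : 0 <= a l m t.
Proof. by rewrite mulr_ge0 ?invr_ge0 ?ler0n // ltW // psi_gt0 // enorm_ge0. Qed.

Lemma aij_le l m t : a l m t <= N.-1%:R^-1.
Proof. by rewrite ler_piMr ?invr_ge0 ?ler0n // psi_le1 // enorm_ge0. Qed.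

Lemma amin_le_aij l m t : amin psi sigma tau x t <= a l m t.
Proof. exact: (@fmin_le R _ (fun p : 'I_N * 'I_N => a p.1 p.2 t) (l, m)). Qed.

Lemma diam_ge0 s : 0 <= diam x s.
Proof. exact: bigmax_ge0. Qed.

Lemma enorm_le_diam i j s : enorm (x i s - x j s) <= diam x s.
Proof.
apply: le_trans (le_bigmax _ (fun i => \big[Num.max/0]_(j < N) enorm (x i s - x j s)) i).
exact: le_bigmax.
Qed.

Lemma diam_continuous s : - tau < s -> {for s, continuous (diam x)}.
Proof.
move=> s_gt; apply: continuous_bigmax => i; apply: continuous_bigmax => j.
by apply/continuous_enorm/continuousB; exact: x_continuous.
Qed.

Definition speed r := \big[Num.max/0]_(l < N) enorm (vel l r).

Lemma speed_ge0 r : 0 <= speed r.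
Proof. exact: bigmax_ge0. Qed.

Lemma enorm_vel_le_speed l r : enorm (vel l r) <= speed r.
Proof. exact: (le_bigmax _ (fun l => enorm (vel l r))). Qed.

Lemma speed_continuous s : 0 < s -> {for s, continuous speed}.
Proof.
by move=> s_gt0; apply: continuous_bigmax => l; apply/continuous_enorm/vel_continuous.
Qed.

Lemma maxvel_speed r : 0 < r -> maxvel x r = speed r.
Proof.
by move=> r_gt0; apply: eq_bigr => l _; have [_ ->] := x_derive l r r_gt0.
Qed.

Definition window s := \int[mu]_(r in `[s - tau, s]) speed r.

Lemma window_ge0 s : 0 <= window s.
Proof. by apply: Rintegral_ge0 => r _; exact: speed_ge0. Qed.

Lemma window_continuous s : tau < s -> {for s, continuous window}.
Proof.
move=> tau_s; apply: (@continuous_Rintegral_window _ _ 0 _ _ tau_ge0).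
  by rewrite subr_gt0.
exact: speed_continuous.
Qed.

Lemma enorm_delay_le_window l s : tau < s ->
  enorm (x l (s - tau) - x l (s - sigma)) <= window s.
Proof.
move=> tau_s; rewrite enorm_distC.
have le_delays : s - tau <= s - sigma by rewrite lerD2l lerN2.
have pos r : s - tau <= r -> 0 < r by move=> ?; lra.
apply: le_trans (enorm_sub_le_Rintegral (x l) (vel l) speed _ _ le_delays _ _ _ _) _.
- by move=> r; rewrite in_itv /= => /andP[/pos r_gt0 _]; exact: x_derive.
- by move=> r; rewrite in_itv /= => /andP[/pos r_gt0 _]; exact: vel_continuous.
- by move=> r; rewrite in_itv /= => /andP[/pos r_gt0 _]; exact: speed_continuous.
- by move=> r _; exact: enorm_vel_le_speed.
apply: ge0_Rintegral_subitv => //; first by rewrite gerBl.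
- by move=> r; rewrite in_itv /= => /andP[/pos r_gt0 _]; exact: speed_continuous.
- by move=> r _; exact: speed_ge0.
Qed.

Lemma enorm_vel_le l s : tau < s -> enorm (vel l s) <= diam x (s - tau) + window s.
Proof.
move=> tau_s; set K := diam x (s - tau) + window s.
have K_ge0 : 0 <= K by rewrite addr_ge0 ?diam_ge0 ?window_ge0.
rewrite /vel; apply: le_trans (ler_enorm_sum _ _ _ _) _.
apply: le_trans (_ : \sum_(m < N | m != l) N.-1%:R^-1 * K <= _); last first.
  by rewrite sumr_const_neq mulrA mulfV ?mul1r // pnatr_eq0 -lt0n -subn1 subn_gt0.
apply: ler_sum => m _; rewrite enormZ ger0_norm ?aij_ge0 //.
have : enorm (x m (s - tau) - x l (s - sigma)) <= K.
  have -> : x m (s - tau) - x l (s - sigma) =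
      (x m (s - tau) - x l (s - tau)) + (x l (s - tau) - x l (s - sigma)).
    by rewrite addrA subrK.
  apply: le_trans (ler_enormD _ _) _.
  by rewrite lerD ?enorm_le_diam ?enorm_delay_le_window.
move=> xK; apply: le_trans (_ : a l m s * K <= _); first by rewrite ler_wpM2l ?aij_ge0.
by rewrite ler_wpM2r ?aij_le.
Qed.

Definition lag_bound t h :=
  \int[mu]_(s in `[t - h, t]) diam x (s - tau) + \int[mu]_(s in `[t - h, t]) window s.

Lemma lag_bound_ge0 t h : 0 <= lag_bound t h.
Proof.
by rewrite addr_ge0 //; apply: Rintegral_ge0 => s _; rewrite ?diam_ge0 ?window_ge0.
Qed.

Lemma enorm_lag_le l t h : 2 * tau < t -> 0 <= h -> h <= tau ->
  enorm (x l t - x l (t - h)) <= lag_bound t h.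
Proof.
move=> tau_t h_ge0 h_le.
have late s : t - h <= s -> tau < s by move=> ?; lra.
have cdiam : {in `[t - h, t], continuous (fun s => diam x (s - tau))}.
  move=> s; rewrite in_itv /= => /andP[/late tau_s _].
  by apply/continuous_shift/diam_continuous; lra.
have cwindow : {in `[t - h, t], continuous window}.
  by move=> s; rewrite in_itv /= => /andP[/late tau_s _]; exact: window_continuous.
rewrite /lag_bound -RintegralD; first last.
- exact: continuous_integrable cwindow.
- exact: continuous_integrable cdiam.
- exact: measurable_itv.
apply: enorm_sub_le_Rintegral; first by rewrite gerBl.
- move=> s; rewrite in_itv /= => /andP[/late tau_s _].
  by apply: x_derive; have := tau_ge0; lra.
- move=> s; rewrite in_itv /= => /andP[/late tau_s _].
  by apply: vel_continuous; have := tau_ge0; lra.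
- by move=> s st; exact: continuousD (cdiam s st) (cwindow s st).
- by move=> s; rewrite in_itv /= => /andP[/late tau_s _]; exact: enorm_vel_le.
Qed.

Lemma Rintegral_maxvel_window t h : 2 * tau < t -> h <= tau ->
  \int[mu]_(s in `[t - h, t]) (\int[mu]_(r in `[s - tau, s]) maxvel x r) =
  \int[mu]_(s in `[t - h, t]) window s.
Proof.
move=> tau_t h_le; apply: eq_Rintegral => s; rewrite inE /= in_itv /= => /andP[s1 _].
apply: eq_Rintegral => r; rewrite inE /= in_itv /= => /andP[r1 _].
by apply: maxvel_speed; lra.
Qed.

Definition sqdist i j s := enorm (x i s - x j s) ^+ 2.

Definition sqdist_rate i j t := 2 * dot (x i t - x j t) (vel i t - vel j t).

Lemma is_derive_sqdist i j t : 0 < t -> is_derive t 1 (sqdist i j) (sqdist_rate i j t).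
Proof.
move=> t_gt0.
exact: is_derive_enorm_sqr (is_deriveB (x_derive i t t_gt0) (x_derive j t t_gt0)).
Qed.

Lemma sqdist_rate_eq0 i j t : sqdist i j t = 0 -> sqdist_rate i j t = 0.
Proof.
move/eqP; rewrite expf_eq0 /= => /eqP/enorm_eq0 xij0.
by rewrite /sqdist_rate xij0 dotC dot0r mulr0.
Qed.

Definition sqdiam s := \big[Num.max/0]_i \big[Num.max/0]_j sqdist i j s.

Lemma diam_sqrt s : diam x s = Num.sqrt (sqdiam s).
Proof.
rewrite /sqdiam (big_morph _ sqrtr_max (@sqrtr0 R)); apply: eq_bigr => i _.
rewrite (big_morph _ sqrtr_max (@sqrtr0 R)); apply: eq_bigr => j _.
by rewrite sqrtr_sqr ger0_norm ?enorm_ge0.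
Qed.

Definition tie_times : set R :=
  \bigcup_(p in [set: ('I_N * 'I_N) * ('I_N * 'I_N)])
    simple_zeros (fun s => sqdist p.1.1 p.1.2 s - sqdist p.2.1 p.2.2 s).

Definition collision_times : set R :=
  \bigcup_(p in [set: 'I_N * 'I_N * 'I_d])
    simple_zeros (fun s => (x p.1.1 s - x p.1.2 s) ord0 p.2).

Lemma countable_exceptional_times : countable (tie_times `|` collision_times).
Proof.
rewrite -bigcup2E; apply: bigcup_countable; first exact: countableP.
move=> [|[|n]] _ /=; last exact: countable0.
- apply: bigcup_countable => [|p _]; first exact: countableP.
  exact: countable_simple_zeros.
- apply: bigcup_countable => [|p _]; first exact: countableP.
  exact: countable_simple_zeros.
Qed.

Lemma sqdist_rate_tie t i j i' j' : 0 < t -> ~ tie_times t ->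
  sqdist i j t = sqdist i' j' t -> sqdist_rate i j t = sqdist_rate i' j' t.
Proof.
move=> t_gt0 no_tie tie; apply/eqP; rewrite -subr_eq0; apply/negPn/negP => rates_neq.
apply: no_tie; exists ((i, j), (i', j')) => //=; split; first by rewrite tie subrr.
exists (sqdist_rate i j t - sqdist_rate i' j' t) => //.
exact: is_deriveB (is_derive_sqdist i j t t_gt0) (is_derive_sqdist i' j' t t_gt0).
Qed.

Lemma derivable_sqdiam t : 0 < t -> ~ tie_times t -> derivable sqdiam t 1.
Proof.
move=> t_gt0 no_tie.
pose S v c := (v = 0 /\ c = 0) \/ exists i j, v = sqdist i j t /\ c = sqdist_rate i j t.
have S_fun v c c' : S v c -> S v c' -> c = c'.
  case=> [[-> ->]|[i [j [-> ->]]]] [[v0 ->]|[i' [j' [E ->]]]] //.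
  - by rewrite sqdist_rate_eq0 // -E.
  - by rewrite sqdist_rate_eq0.
  - exact: sqdist_rate_tie.
have S00 : S 0 0 by left.
have inner i : exists c, is_derive t 1 (fun s => \big[Num.max/0]_j sqdist i j s) c /\
    S (\big[Num.max/0]_j sqdist i j t) c.
  apply: (is_derive_bigmax _ S_fun S00) => j; first exact: is_derive_sqdist.
  by right; exists i, j.
have [c dc] := choice inner.
have [c' [dsq _]] := is_derive_bigmax (index_enum 'I_N) S_fun S00
  (fun i => (dc i).1) (fun i => (dc i).2).
by case: dsq.
Qed.

Lemma is_derive_diam_at_consensus t : 0 < t -> diam x t = 0 -> ~ collision_times t ->
  is_derive t 1 (diam x) 0.
Proof.
move=> t_gt0 D0 no_coll.
have coord0 i j k : (x i t - x j t) ord0 k = 0.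
  have -> : x i t - x j t = 0.
    by apply/enorm_eq0/eqP; rewrite eq_le enorm_ge0 andbT -D0 enorm_le_diam.
  by rewrite mxE.
have dcoord0 i j k : is_derive t 1 (fun s => (x i s - x j s) ord0 k) 0.
  have dk := is_derive_coord k (is_deriveB (x_derive i t t_gt0) (x_derive j t t_gt0)).
  have [c0|c_neq0] := eqVneq ((vel i t - vel j t) ord0 k) 0; first by rewrite -c0.
  exfalso; apply: no_coll; exists (i, j, k) => //.
  by split; [exact: coord0 | exists ((vel i t - vel j t) ord0 k)].
have dabs i j k : is_derive t 1 (fun s => `|(x i s - x j s) ord0 k|) 0.
  by apply: (is_derive0_dominated (coord0 i j k) (dcoord0 i j k)) => s; rewrite normr_id.
pose G s := \sum_(i < N) \sum_(j < N) \sum_(k < d) `|(x i s - x j s) ord0 k|.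
apply: (@is_derive0_dominated _ _ G).
- rewrite /G big1 // => i _; rewrite big1 // => j _.
  by rewrite big1 // => k _; rewrite coord0 normr0.
- have -> : 0 = \sum_(i < N) \sum_(j < N) \sum_(k < d) (0 : R).
    by rewrite big1 // => i _; rewrite big1 // => j _; rewrite big1.
  by do 3 apply: is_derive_sumr => ?; exact: dabs.
- move=> s; have G_ge0 : 0 <= G s.
    by do 3 (apply: sumr_ge0 => ? _); exact: normr_ge0.
  rewrite !ger0_norm ?diam_ge0 //.
  rewrite /diam /G; apply: le_trans (bigmax_le_sum _ _ (fun i => bigmax_ge0 _ _ _)) _.
  apply: ler_sum => i _; apply: le_trans (bigmax_le_sum _ _ (fun j => enorm_ge0 _)) _.
  by apply: ler_sum => j _; exact: enorm_le_sum_abs.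
Qed.

Lemma derivable_diam t : 0 < t -> ~ tie_times t -> ~ collision_times t ->
  derivable (diam x) t 1.
Proof.
move=> t_gt0 no_tie no_coll.
have [sq_gt0|sq_le0] := ltP 0 (sqdiam t).
  have -> : diam x = Num.sqrt \o sqdiam by apply/funext => s; rewrite diam_sqrt.
  have dsq := derivableP (derivable_sqdiam t t_gt0 no_tie).
  by case: (is_derive1_comp (is_derive1_sqrt sq_gt0) dsq).
have D0 : diam x t = 0 by rewrite diam_sqrt ler0_sqrtr.
by case: (is_derive_diam_at_consensus t t_gt0 D0 no_coll).
Qed.

Lemma diam_mul_derive t i j : 0 < t -> derivable (diam x) t 1 ->
  diam x t = enorm (x i t - x j t) ->
  diam x t * 'D_1 (diam x) t = dot (x i t - x j t) (vel i t - vel j t).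
Proof.
move=> t_gt0 dD Dij.
have dD2 : is_derive t 1 (fun s => diam x s ^+ 2) (2 * diam x t * 'D_1 (diam x) t).
  have := is_deriveM (derivableP dD) (derivableP dD).
  have -> : diam x * diam x = (fun s => diam x s ^+ 2).
    by apply/funext => s; rewrite expr2.
  by move/is_derive_eq; apply; rewrite /GRing.scale /=; ring.
have dgap := is_deriveB dD2 (is_derive_sqdist i j t t_gt0).
have : 'D_1 ((fun s => diam x s ^+ 2) - sqdist i j) t = 0.
  apply: derive1_at_global_min; first by case: dgap.
  move=> s; rewrite -[(_ - _) t]/(diam x t ^+ 2 - sqdist i j t).
  rewrite -[(_ - _) s]/(diam x s ^+ 2 - sqdist i j s) /sqdist -Dij subrr subr_ge0.
  by rewrite lerXn2r ?nnegrE ?enorm_ge0 ?diam_ge0 // enorm_le_diam.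
rewrite derive_val => /eqP; rewrite subr_eq0 /sqdist_rate -mulrA => /eqP.
by apply: mulfI; rewrite pnatr_eq0.
Qed.

Lemma derive_diam_le t : 2 * tau < t -> derivable (diam x) t 1 ->
  'D_1 (diam x) t <= 2 * lag_bound t tau + 2 * lag_bound t sigma
                     - N%:R * amin psi sigma tau x t * diam x t.
Proof.
move=> tau_t dD; have t_gt0 : 0 < t by have := tau_ge0; lra.
have [D0|D_neq0] := eqVneq (diam x t) 0.
  have -> : 'D_1 (diam x) t = 0.
    by apply: derive1_at_global_min => // s; rewrite D0 diam_ge0.
  rewrite D0 mulr0 subr0.
  by have := lag_bound_ge0 t tau; have := lag_bound_ge0 t sigma; lra.
have D_gt0 : 0 < diam x t by rewrite lt_def D_neq0 diam_ge0.
pose i0 : 'I_N := Ordinal (ltnW N_gt1).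
have [i _ Di] := eq_bigmax i0 xpredT
  (fun i => \big[Num.max/0]_(j < N) enorm (x i t - x j t)) isT
  (fun i _ => bigmax_ge0 _ _ _).
have [j _ Dij] := eq_bigmax i0 xpredT
  (fun j => enorm (x i t - x j t)) isT (fun j _ => enorm_ge0 _).
have Dt : diam x t = enorm (x i t - x j t) by rewrite /diam Di Dij.
have := @dot_relative_velocity_le R N d (fun l => x l t) (fun l => x l (t - tau))
  (fun l => x l (t - sigma)) (fun l m => a l m t) (amin psi sigma tau x t) (diam x t)
  (lag_bound t tau) (lag_bound t sigma) N_gt1 (fun l m => amin_le_aij l m t)
  (fun l m => aij_ge0 l m t) (fun l m => aij_le l m t) (fun l m => enorm_le_diam l m t)
  (fun l => enorm_lag_le l t tau tau_t tau_ge0 (lexx _))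
  (fun l => enorm_lag_le l t sigma tau_t sigma_ge0 sigma_le_tau) i j (esym Dt).
have vel_eq l : velocity (fun l => x l (t - tau)) (fun l => x l (t - sigma))
  (fun l m => a l m t) l = vel l t by [].
rewrite !vel_eq.
rewrite -(diam_mul_derive _ _ _ t_gt0 dD Dt) => key.
by rewrite -(ler_pM2l D_gt0); apply: le_trans key _; lra.
Qed.

Lemma ae_derive_diam_le :
  {ae mu, forall t : R, 2 * tau < t ->
     derivable (diam x) t 1 /\
     'D_1 (diam x) t <=
       2 * (\int[mu]_(s in `[t - tau, t]) diam x (s - tau))
     + 2 * (\int[mu]_(s in `[t - sigma, t]) diam x (s - tau))
     + 2 * (\int[mu]_(s in `[t - tau, t])
              (\int[mu]_(r in `[s - tau, s]) maxvel x r))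
     + 2 * (\int[mu]_(s in `[t - sigma, t])
              (\int[mu]_(r in `[s - tau, s]) maxvel x r))
     - N%:R * amin psi sigma tau x t * diam x t}.
Proof.
exists (tie_times `|` collision_times); split.
- apply: countable_measurable countable_exceptional_times => r.
  exact: measurable_set1.
- exact: countable_lebesgue_measure0 countable_exceptional_times.
move=> t /= not_bound; apply: contrapT => regular; apply: not_bound => tau_t.
have t_gt0 : 0 < t by have := tau_ge0; lra.
have dD : derivable (diam x) t 1.
  by apply: derivable_diam => // [tie|coll]; apply: regular; [left|right].
split => //; rewrite !Rintegral_maxvel_window //.
by apply: le_trans (derive_diam_le _ tau_t dD) _; rewrite /lag_bound; lra.
Qed.

End DelayedConsensus.

Theorem lemma3p2 (R : realType) (N d : nat) (sigma tau : R) (psi : R -> R)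
  (x : 'I_N -> R -> 'rV[R]_d) :
  (2 <= N)%N -> (1 <= d)%N ->
  0 <= sigma -> sigma <= tau ->
  {within `[0, +oo[, continuous psi} ->
  (forall r s : R, 0 <= r -> r <= s -> psi s <= psi r) ->
  (forall r : R, 0 <= r -> 0 < psi r) ->
  (forall r : R, 0 <= r -> psi r <= 1) ->
  (forall i, {within `[- tau, +oo[, continuous (x i)}) ->
  (forall i (t : R), 0 < t ->
     is_derive t 1 (x i)
       (\sum_(j < N | j != i)
          aij psi sigma tau x i j t *: (x j (t - tau) - x i (t - sigma)))) ->
  {ae (@lebesgue_measure R), forall t : R, 2 * tau < t ->
     derivable (diam x) t 1 /\
     'D_1 (diam x) t <=
       2 * (\int[lebesgue_measure]_(s in `[t - tau, t]) diam x (s - tau))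
     + 2 * (\int[lebesgue_measure]_(s in `[t - sigma, t]) diam x (s - tau))
     + 2 * (\int[lebesgue_measure]_(s in `[t - tau, t])
              (\int[lebesgue_measure]_(r in `[s - tau, s]) maxvel x r))
     + 2 * (\int[lebesgue_measure]_(s in `[t - sigma, t])
              (\int[lebesgue_measure]_(r in `[s - tau, s]) maxvel x r))
     - N%:R * amin psi sigma tau x t * diam x t}.
Proof.
move=> N_gt1 _ sigma_ge0 sigma_le_tau psi_cont _ psi_gt0 psi_le1 x_cont x_derive.
exact: (@ae_derive_diam_le R N d sigma tau psi x N_gt1 sigma_ge0 sigma_le_tau
  psi_cont psi_gt0 psi_le1 x_cont x_derive).
Qed.
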